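(* Let $\mathcal{Z}\subset\mathbb{R}^d$ be a convex compact set with $\max_{\mathbf{z},\mathbf{z}'\in\mathcal{Z}}\|\mathbf{z}-\mathbf{z}'\|\le D$, let $F:\mathcal{Z}\to\mathbb{R}^d$ be single-valued, monotone and $L$-Lipschitz continuous, and let $\mathbf{w}_*$ be a solution of $\mathrm{SVI}(F,\mathcal{Z})$. For any $\widehat{\mathbf{z}}\in\mathcal{Z}$ (e.g., the output of any algorithm), define $\bar{\mathbf{z}}=\mathrm{Proj}_{\mathcal{Z}}(\widehat{\mathbf{z}}-\eta F(\widehat{\mathbf{z}}))$ with $\eta=1/(\sqrt2L)$. Then $$\max_{\mathbf{z}\in\mathcal{Z}}F(\bar{\mathbf{z}})^\top(\bar{\mathbf{z}}-\mathbf{z})\le DL(2+\sqrt2)\|\widehat{\mathbf{z}}-\mathbf{w}_*\|.$$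
   Context: $\mathrm{Proj}_{\mathcal{Z}}$ is the Euclidean projection onto $\mathcal{Z}$. $F$ is monotone if $\langle F(\mathbf{z})-F(\mathbf{z}'),\mathbf{z}-\mathbf{z}'\rangle\ge0$ for all $\mathbf{z},\mathbf{z}'\in\mathcal{Z}$. $\mathrm{SVI}(F,\mathcal{Z})$ asks for $\mathbf{w}_*\in\mathcal{Z}$ with $\langle F(\mathbf{w}_* ),\mathbf{z}-\mathbf{w}_*\rangle\ge0$ for all $\mathbf{z}\in\mathcal{Z}$. *)

From HB Require Import structures.
From mathcomp Require Import all_boot all_order all_algebra.
From mathcomp Require Import all_classical all_reals all_analysis.
Set Implicit Arguments. Unset Strict Implicit. Unset Printing Implicit Defensive.
Import Order.TTheory GRing.Theory Num.Theory.
Import numFieldNormedType.Exports.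
Local Open Scope ring_scope.
Local Open Scope classical_set_scope.

Definition vi_dotv {R : realType} {d : nat} (u v : 'rV[R]_d) : R :=
  \sum_(i < d) u ord0 i * v ord0 i.

Definition vi_enorm {R : realType} {d : nat} (u : 'rV[R]_d) : R :=
  Num.sqrt (vi_dotv u u).

Definition vi_convex_set {R : realType} {d : nat} (Z : set 'rV[R]_d) : Prop :=
  forall x y, Z x -> Z y -> forall t : R, 0 <= t <= 1 ->
    Z (t *: x + (1 - t) *: y).

Definition vi_monotone_on {R : realType} {d : nat} (Z : set 'rV[R]_d)
  (F : 'rV[R]_d -> 'rV[R]_d) : Prop :=
  forall z z', Z z -> Z z' -> 0 <= vi_dotv (F z - F z') (z - z').

Definition vi_lipschitz_on {R : realType} {d : nat} (Z : set 'rV[R]_d)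
  (F : 'rV[R]_d -> 'rV[R]_d) (L : R) : Prop :=
  forall z z', Z z -> Z z' -> vi_enorm (F z - F z') <= L * vi_enorm (z - z').

Definition vi_SVI_sol {R : realType} {d : nat} (Z : set 'rV[R]_d)
  (F : 'rV[R]_d -> 'rV[R]_d) (w : 'rV[R]_d) : Prop :=
  Z w /\ forall z, Z z -> 0 <= vi_dotv (F w) (z - w).

(* p is the Euclidean projection of x onto Z (unique for nonempty closed convex Z) *)
Definition vi_is_proj {R : realType} {d : nat} (Z : set 'rV[R]_d)
  (x p : 'rV[R]_d) : Prop :=
  Z p /\ forall z, Z z -> vi_enorm (x - p) <= vi_enorm (x - z).

(* The projection inequality at the SVI solution [w], combined with the
   Lipschitz bound on [eta |F zhat - F w|], shows that the projected step moves
   by at most [sqrt 2 |zhat - w|].  The projection inequality at an arbitrary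
   [z] bounds [<F zhat, zbar - z>] by [eta^-1 |zhat - zbar| D], and Lipschitz
   continuity bounds [<F zbar - F zhat, zbar - z>] by [L |zhat - zbar| D]; with
   [eta^-1 = sqrt 2 L] the gap is at most [(1 + sqrt 2) sqrt 2 L D |zhat - w|]. *)
From HB Require Import structures.
From mathcomp Require Import all_boot all_order all_algebra.
From mathcomp Require Import all_classical all_reals all_analysis.
From mathcomp Require Import ring lra.
Import Order.TTheory GRing.Theory Num.Theory.
Import numFieldNormedType.Exports.
Local Open Scope ring_scope.
Local Open Scope classical_set_scope.

Section EuclideanGeometry.
Context {R : realType} {d : nat}.
Implicit Types u v w : 'rV[R]_d.

Lemma vi_dotvC u v : vi_dotv u v = vi_dotv v u.
Proof. by apply: eq_bigr => i _; rewrite mulrC. Qed.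

Lemma vi_dotvDl u v w : vi_dotv (u + v) w = vi_dotv u w + vi_dotv v w.
Proof. by rewrite /vi_dotv -big_split; apply: eq_bigr => i _; rewrite mxE mulrDl. Qed.

Lemma vi_dotvNl u w : vi_dotv (- u) w = - vi_dotv u w.
Proof. by rewrite /vi_dotv -sumrN; apply: eq_bigr => i _; rewrite mxE mulNr. Qed.

Lemma vi_dotvZl k u w : vi_dotv (k *: u) w = k * vi_dotv u w.
Proof. by rewrite /vi_dotv mulr_sumr; apply: eq_bigr => i _; rewrite mxE mulrA. Qed.

Lemma vi_dotvDr u v w : vi_dotv w (u + v) = vi_dotv w u + vi_dotv w v.
Proof. by rewrite vi_dotvC vi_dotvDl !(vi_dotvC w). Qed.

Lemma vi_dotvNr u w : vi_dotv w (- u) = - vi_dotv w u.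
Proof. by rewrite vi_dotvC vi_dotvNl vi_dotvC. Qed.

Lemma vi_dotvZr k u w : vi_dotv w (k *: u) = k * vi_dotv w u.
Proof. by rewrite vi_dotvC vi_dotvZl vi_dotvC. Qed.

Definition vi_dotvE :=
  (vi_dotvDl, vi_dotvDr, vi_dotvNl, vi_dotvNr, vi_dotvZl, vi_dotvZr).

Lemma vi_dotv_subZ k u v :
  vi_dotv (u - k *: v) (u - k *: v) =
    vi_dotv u u - 2 * k * vi_dotv u v + k ^+ 2 * vi_dotv v v.
Proof. by rewrite !vi_dotvE (vi_dotvC v u); ring. Qed.

Lemma vi_dotv0l u : vi_dotv 0 u = 0.
Proof. by rewrite -(scale0r 0) vi_dotvZl mul0r. Qed.

Lemma vi_dotvv_ge0 u : 0 <= vi_dotv u u.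
Proof. by apply: sumr_ge0 => i _; rewrite -expr2 sqr_ge0. Qed.

Lemma vi_dotvv_eq0 u : (vi_dotv u u == 0) = (u == 0).
Proof.
apply/idP/eqP => [|->]; last by rewrite vi_dotv0l.
rewrite psumr_eq0 => [/allP u0|i _]; last by rewrite -expr2 sqr_ge0.
apply/rowP => i; rewrite mxE.
by have /u0 := mem_index_enum i; rewrite /= mulf_eq0 orbb => /eqP.
Qed.

Lemma vi_enorm_ge0 u : 0 <= vi_enorm u.
Proof. exact: sqrtr_ge0. Qed.

Lemma vi_enorm_gt0 u : u != 0 -> 0 < vi_enorm u.
Proof. by move=> u0; rewrite sqrtr_gt0 lt0r vi_dotvv_eq0 u0 vi_dotvv_ge0. Qed.

Lemma vi_enorm_sqr u : vi_enorm u ^+ 2 = vi_dotv u u.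
Proof. by rewrite sqr_sqrtr // vi_dotvv_ge0. Qed.

Lemma vi_enorm_distC u v : vi_enorm (u - v) = vi_enorm (v - u).
Proof. by rewrite -opprB /vi_enorm vi_dotvNl vi_dotvNr opprK. Qed.

Lemma vi_cauchy_schwarz u v : vi_dotv u v <= vi_enorm u * vi_enorm v.
Proof.
have [->|u0] := eqVneq u 0; first by rewrite vi_dotv0l mulr_ge0 ?vi_enorm_ge0.
have [->|v0] := eqVneq v 0; first by rewrite vi_dotvC vi_dotv0l mulr_ge0 ?vi_enorm_ge0.
have nu := vi_enorm_gt0 _ u0; have nv := vi_enorm_gt0 _ v0.
have := vi_dotvv_ge0 (vi_enorm v *: u - vi_enorm u *: v).
rewrite !vi_dotvE (vi_dotvC v u) -!vi_enorm_sqr.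
have nuv := mulr_gt0 nu nv.
nra.
Qed.

End EuclideanGeometry.

Section Projection.
Context {R : realType} {d : nat} {Z : set 'rV[R]_d}.
Hypothesis convexZ : vi_convex_set Z.

(* If [B := <x - p, z - p>] were positive, moving from [p] towards [z] by
   [t := B / (B + |z - p|^2)] would strictly decrease the distance to [x]. *)
Lemma vi_is_proj_dotv_le0 {x p z} :
  vi_is_proj Z x p -> Z z -> vi_dotv (x - p) (z - p) <= 0.
Proof.
move=> [Zp p_min] Zz; set B := vi_dotv (x - p) (z - p).
have Q_ge0 := vi_dotvv_ge0 (z - p); set Q := vi_dotv (z - p) (z - p) in Q_ge0.
rewrite leNgt; apply/negP => B_gt0.
have BQ_gt0 : 0 < B + Q by lra.
set t := B / (B + Q).
have t_gt0 : 0 < t by rewrite divr_gt0.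
have t_le1 : t <= 1 by rewrite ler_pdivrMr // mul1r; lra.
have tBQ : t * (B + Q) = B by rewrite mulfVK // gt_eqF.
have Zpt : Z (t *: z + (1 - t) *: p) by apply: convexZ; rewrite ?(ltW t_gt0).
have := p_min _ Zpt.
have -> : x - (t *: z + (1 - t) *: p) = (x - p) - t *: (z - p).
  by apply/rowP => i; rewrite !mxE; ring.
rewrite /vi_enorm ler_sqrt ?vi_dotvv_ge0 // vi_dotv_subZ -/B -/Q.
nra.
Qed.

Section ProjectedStep.
Context {F : 'rV[R]_d -> 'rV[R]_d} {eta : R} {zhat zbar : 'rV[R]_d}.
Hypothesis zbar_proj : vi_is_proj Z (zhat - eta *: F zhat) zbar.

Lemma vi_proj_step_sqr_dist w :
  0 <= eta -> vi_SVI_sol Z F w ->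
  vi_dotv (zhat - zbar) (zhat - zbar) <=
    vi_dotv (zhat - w) (zhat - w) + eta ^+ 2 * vi_dotv (F zhat - F w) (F zhat - F w).
Proof.
(* With [a := zhat - w], [u := zbar - w], [q := F zhat - F w], the projection
   inequality at [w] and the SVI at [w] give [|u|^2 <= <a - eta q, u>];
   then [|a - u|^2 <= |a|^2 + eta^2 |q|^2] since [|u + eta q|^2 >= 0]. *)
move=> eta_ge0 [Zw w_sol].
have := vi_is_proj_dotv_le0 zbar_proj Zw.
have -> : zhat - eta *: F zhat - zbar =
  (zhat - w) - (zbar - w) - eta *: (F zhat - F w) - eta *: F w.
  by apply/rowP => i; rewrite !mxE; ring.
have -> : zhat - zbar = (zhat - w) - (zbar - w).
  by apply/rowP => i; rewrite !mxE; ring.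
have -> : w - zbar = - (zbar - w) by rewrite opprB.
have := mulr_ge0 eta_ge0 (w_sol _ zbar_proj.1).
have := vi_dotvv_ge0 ((zbar - w) + eta *: (F zhat - F w)).
move: (zhat - w) (zbar - w) (F zhat - F w) => a u q.
rewrite !vi_dotvE (vi_dotvC a u) (vi_dotvC q u) (vi_dotvC (F w) u) expr2.
lra.
Qed.

Lemma vi_proj_step_dist_le {L w} :
  0 <= eta -> eta * L <= 1 -> vi_lipschitz_on Z F L -> vi_SVI_sol Z F w ->
  Z zhat ->
  vi_enorm (zhat - zbar) <= Num.sqrt 2 * vi_enorm (zhat - w).
Proof.
move=> eta_ge0 etaL_le1 lipF solw Zh.
have na_ge0 := vi_enorm_ge0 (zhat - w).
have scaled_lip : eta * vi_enorm (F zhat - F w) <= vi_enorm (zhat - w).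
  have := ler_wpM2r na_ge0 etaL_le1.
  have := ler_wpM2l eta_ge0 (lipF _ _ Zh solw.1).
  rewrite mul1r -mulrA; exact: le_trans.
have := vi_proj_step_sqr_dist w eta_ge0 solw.
rewrite -!vi_enorm_sqr => sqr_dist.
rewrite /vi_enorm -sqrtrM // ler_sqrt ?mulr_ge0 ?vi_dotvv_ge0 // -!vi_enorm_sqr.
have := ler_pM (mulr_ge0 eta_ge0 (vi_enorm_ge0 _)) (mulr_ge0 eta_ge0 (vi_enorm_ge0 _))
  scaled_lip scaled_lip.
rewrite -!expr2 in sqr_dist *; rewrite exprMn.
lra.
Qed.

Lemma vi_proj_step_gap {L z} :
  0 < eta -> vi_lipschitz_on Z F L -> Z zhat -> Z z ->
  vi_dotv (F zbar) (zbar - z) <=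
    (L + eta^-1) * vi_enorm (zhat - zbar) * vi_enorm (zbar - z).
Proof.
move=> eta_gt0 lipF Zh Zz.
have lip_part : vi_dotv (F zbar - F zhat) (zbar - z) <=
    L * vi_enorm (zhat - zbar) * vi_enorm (zbar - z).
  apply: le_trans (vi_cauchy_schwarz _ _) _; apply: ler_wpM2r; first exact: vi_enorm_ge0.
  by rewrite (vi_enorm_distC zhat); apply: lipF => //; exact: zbar_proj.1.
have proj_part : eta * vi_dotv (F zhat) (zbar - z) <=
    vi_enorm (zhat - zbar) * vi_enorm (zbar - z).
  apply: le_trans (vi_cauchy_schwarz _ _).
  have := vi_is_proj_dotv_le0 zbar_proj Zz.
  have -> : zhat - eta *: F zhat - zbar = (zhat - zbar) - eta *: F zhat.
    by apply/rowP => i; rewrite !mxE; ring.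
  rewrite -(opprB zbar z); move: (zhat - zbar) (zbar - z) => r e.
  rewrite !vi_dotvE; lra.
have -> : vi_dotv (F zbar) (zbar - z) = vi_dotv (F zbar - F zhat) (zbar - z)
    + eta^-1 * (eta * vi_dotv (F zhat) (zbar - z)).
  by rewrite mulrA mulVf ?gt_eqF // mul1r vi_dotvDl vi_dotvNl subrK.
rewrite !mulrDl -[_^-1 * _ * _]mulrA; apply: lerD => //.
by apply: ler_wpM2l; rewrite // invr_ge0 ltW.
Qed.

End ProjectedStep.
End Projection.

Theorem lemma10 (R : realType) (d : nat) (Z : set 'rV[R]_d)
  (F : 'rV[R]_d -> 'rV[R]_d) (D L : R) (w zhat zbar : 'rV[R]_d) :
  vi_convex_set Z -> compact Z ->
  (forall z z', Z z -> Z z' -> vi_enorm (z - z') <= D) ->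
  0 < L -> vi_monotone_on Z F -> vi_lipschitz_on Z F L ->
  vi_SVI_sol Z F w ->
  Z zhat ->
  vi_is_proj Z (zhat - (1 / (Num.sqrt 2 * L)) *: F zhat) zbar ->
  forall z, Z z ->
    vi_dotv (F zbar) (zbar - z) <= D * L * (2 + Num.sqrt 2) * vi_enorm (zhat - w).
Proof.
move=> convexZ _ diamZ L_gt0 _ lipF solw Zh zbar_proj z Zz.
set s := Num.sqrt 2 in zbar_proj *.
have s_gt0 : 0 < s by rewrite sqrtr_gt0.
have s_ge1 : 1 <= s by rewrite -sqrtr1 ler_sqrt // ler1n.
have s_sqr : s * s = 2 by rewrite -expr2 sqr_sqrtr.
set eta := 1 / (s * L) in zbar_proj.
have eta_gt0 : 0 < eta by rewrite divr_gt0 ?mulr_gt0.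
have eta_inv : eta^-1 = s * L by rewrite /eta div1r invrK.
have etaL_le1 : eta * L <= 1.
  by rewrite /eta div1r invfM -mulrA mulVf ?gt_eqF // mulr1 invf_le1.
have dist := vi_proj_step_dist_le convexZ zbar_proj (ltW eta_gt0) etaL_le1 lipF solw Zh.
apply: le_trans (vi_proj_step_gap convexZ zbar_proj eta_gt0 lipF Zh Zz) _.
have -> : D * L * (2 + s) * vi_enorm (zhat - w) =
    (L + s * L) * (s * vi_enorm (zhat - w)) * D by rewrite -s_sqr; ring.
have coef_ge0 : 0 <= L + s * L by rewrite addr_ge0 ?mulr_ge0 // ltW.
rewrite eta_inv; apply: ler_pM; rewrite ?vi_enorm_ge0 //.
- by rewrite mulr_ge0 ?vi_enorm_ge0.
- by rewrite ler_wpM2l.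
- exact: diamZ zbar_proj.1 Zz.
Qed.
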